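(* Let $P\ge4$, $S\ge2$, $\varepsilon\ge0$, and let $R$ be a positive integer. Suppose that for every prime $p\in(P/2,P]$, $S_p$ is a multiset of integers in $(-p/2,p/2)$ with $|S_p|=S$ and $|f_{S_p}|\le\varepsilon$ (computed modulo $p$). Suppose $q$ is a prime with $q>P$. Then the multiset $$T=\{r+s^{(p)}(p^{-1})_q:\ 1\le r\le R,\ p \text{ prime},\ P/2<p\le P,\ s^{(p)}\in S_p\}$$ of residues modulo $q$ satisfies $$|f_T|\le\varepsilon+\frac{2/\sqrt3}{R}+\frac{\log(q/3)}{V\log(P/2)},$$ where $V$ is the number of primes in $(P/2,P]$.
   Context: $(a^{-1})_q$ denotes the inverse of $a$ modulo $q$. For a multiset $S$ of residues modulo $N$, $f_S(k)=\sum_{s\in S}e^{2\pi iks/N}$ (with multiplicity) and $|f_S|=\frac1{|S|}\max_{1\le k\le N-1}|f_S(k)|$. *)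

From Stdlib Require Import Reals ZArith List Znumtheory.
Open Scope R_scope.

Definition lsum (l : list Z) (g : Z -> R) : R :=
  fold_right (fun s acc => g s + acc) 0 l.

(* |f_S(k)| where f_S(k) = sum_{s in S} exp(2 pi i k s / N); the modulus of the
   complex sum is written out as sqrt(Re^2 + Im^2). *)
Definition fabsS (N : Z) (S : list Z) (k : Z) : R :=
  let th s := 2 * PI * IZR k * IZR s / IZR N in
  sqrt ((lsum S (fun s => cos (th s)))^2 + (lsum S (fun s => sin (th s)))^2).

(* |f_S| = (1/|S|) max_{1 <= k <= N-1} |f_S(k)|  (max over a nonempty list
   of nonnegative reals when N >= 2, so folding Rmax from 0 is exact). *)
Definition fnorm (N : Z) (S : list Z) : R :=
  / INR (length S) *
  fold_right Rmax 0
    (map (fun k => fabsS N S k) (map Z.of_nat (seq 1 (Z.to_nat N - 1)))).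

(* (a^{-1})_q : the inverse of a modulo a prime q, as the representative in
   [0, q) given by Fermat: a^(q-2) mod q. *)
Definition inv_mod (a q : Z) : Z := Z.modulo (Z.pow a (q - 2)) q.

Definition Tset (Rn : nat) (ps : list Z) (Sp : Z -> list Z) (q : Z) : list Z :=
  flat_map (fun r =>
    flat_map (fun p =>
      map (fun s => (Z.of_nat r + s * inv_mod p q)%Z) (Sp p)) ps)
    (seq 1 Rn).

From Stdlib Require Import Reals ZArith List Znumtheory Lra Lia.
From Coquelicot Require Import Rcomplements Complex.
From mathcomp Require all_boot zify cyclic.
Open Scope R_scope.

(* Write e(t) = exp(2 pi i t) and u = k / q.  The sum f_T(k) factors as the geometric
   sum over r times a sum over the primes p.  Since p (p^-1)_q = 1 + q b, the phase
   u s (p^-1)_q equals k b s / p plus u s / p, and the latter moves e(.) by at most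
   2 sin(pi |u| / 2).  When p does not divide k, neither does p divide k b, so the
   remaining sum is f_{S_p}(k b), of size at most |S| eps; the primes dividing k are
   counted trivially, and there are at most log(q/3) / log(P/2) of them when |k| <= q/3.
   For |k| <= q/3 the geometric sum times 2 sin(pi |u| / 2) is at most 2/sqrt 3, and
   for q/3 < |k| <= q/2 the geometric sum alone is at most 2/sqrt 3.  Frequencies
   above q/2 reduce to these by periodicity. *)

Module LittleFermat.
Import all_boot zify cyclic.
Local Open Scope nat_scope.

Lemma prime_of_Zprime (n : nat) : Znumtheory.prime (Z.of_nat n) -> prime n.
Proof.
move=> pn; have n2 := prime_ge_2 _ pn.
apply/primeP; split; first by lia.
move=> d /dvdnP [k def_n].
have dvd_dn : (Z.of_nat d | Z.of_nat n)%Z by exists (Z.of_nat k); lia.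
by case: (prime_divisors _ pn _ dvd_dn) => [|[|[|]]] ?; apply/orP; lia.
Qed.

Lemma pow_pred_prime (a n : nat) :
  Znumtheory.prime (Z.of_nat n) -> Peano.lt 0 a -> Peano.lt a n ->
  exists t, Nat.pow a (Nat.sub n 1) = Nat.add (Nat.mul t n) 1.
Proof.
move=> /prime_of_Zprime pn /ltP a_gt0 /ltP a_lt_n.
have cop : coprime a n.
  by rewrite coprime_sym prime_coprime //; apply/negP => /dvdn_leq; lia.
have E := Euler_exp_totient cop; rewrite totient_prime // in E.
exists (a ^ n.-1 %/ n).
rewrite (_ : Nat.pow a (Nat.sub n 1) = a ^ n.-1).
  by rewrite {1}(divn_eq (a ^ n.-1) n) E modn_small // prime_gt1.
rewrite (_ : Nat.sub n 1 = n.-1); last by lia.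
by elim: n.-1 => [|k IHk] //=; rewrite expnS IHk.
Qed.

End LittleFermat.

Lemma inv_mod_spec (p q : Z) :
  prime q -> (0 < p < q)%Z -> exists b, (p * inv_mod p q = 1 + q * b)%Z.
Proof.
  intros Hq Hp. pose proof (prime_ge_2 q Hq) as Hq2.
  destruct (LittleFermat.pow_pred_prime (Z.to_nat p) (Z.to_nat q)) as [t Ht].
  1: rewrite Z2Nat.id by lia; exact Hq.
  1, 2: lia.
  apply (f_equal Z.of_nat) in Ht.
    rewrite Nat2Z.inj_pow, Nat2Z.inj_add, Nat2Z.inj_mul, Nat2Z.inj_sub, !Z2Nat.id in Ht by lia.
    assert (Hpow : (p * p ^ (q - 2) = p ^ (q - 1))%Z).
    { rewrite <- Z.pow_succ_r by lia. f_equal. lia. }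
    unfold inv_mod. rewrite Z.mod_eq by lia.
    exists (Z.of_nat t - p * (p ^ (q - 2) / q))%Z.
    rewrite Z.mul_sub_distr_l, Hpow. simpl in Ht. rewrite Ht. ring.
Qed.

Lemma rel_prime_prod (a : Z) (l : list Z) :
  prime a -> (forall b, In b l -> prime b /\ b <> a) -> rel_prime a (fold_right Z.mul 1%Z l).
Proof.
  intros Ha. induction l as [|b l IHl]; simpl; intros Hl.
  - apply rel_prime_sym, rel_prime_1.
  - destruct (Hl b (or_introl eq_refl)) as [Hb Hba].
    apply rel_prime_mult; [|auto].
    apply prime_rel_prime; [exact Ha|].
    intros Hab. apply Hba. symmetry. exact (prime_div_prime a b Ha Hb Hab).
Qed.

Lemma prod_primes_divide (k : Z) (l : list Z) :
  NoDup l -> (forall p, In p l -> prime p /\ (p | k)%Z) -> (fold_right Z.mul 1%Z l | k)%Z.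
Proof.
  induction l as [|a l IHl]; simpl; intros Hnd Hl.
  - apply Z.divide_1_l.
  - inversion Hnd as [|? ? Ha_l Hnd_l]; subst.
    destruct (Hl a (or_introl eq_refl)) as [Ha [z Hz]].
    destruct (IHl Hnd_l (fun p Hp => Hl p (or_intror Hp))) as [w Hw].
    assert (Hcop : rel_prime a (fold_right Z.mul 1%Z l)).
    { apply rel_prime_prod; [exact Ha|]. intros b Hb. split.
      - apply Hl; auto.
      - intros ->. contradiction. }
    assert (Haw : (a | w)%Z).
    { apply Gauss with (fold_right Z.mul 1%Z l); [|exact Hcop].
      exists z. rewrite Z.mul_comm, <- Hw. exact Hz. }
    destruct Haw as [v Hv]. exists v. rewrite Hw, Hv. ring.
Qed.

Lemma pow_le_prod (x : R) (l : list Z) :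
  0 <= x -> (forall p, In p l -> x <= IZR p) -> x ^ length l <= IZR (fold_right Z.mul 1%Z l).
Proof.
  intros Hx. induction l as [|p l IHl]; simpl; intros Hl; [lra|].
  rewrite mult_IZR. apply Rmult_le_compat; auto using pow_le.
Qed.

Lemma count_large_prime_divisors (x : R) (k : Z) (l : list Z) :
  0 < x -> k <> 0%Z -> NoDup l ->
  (forall p, In p l -> prime p /\ x <= IZR p /\ (p | k)%Z) ->
  INR (length l) * ln x <= ln (IZR (Z.abs k)).
Proof.
  intros Hx Hk Hnd Hl.
  assert (Hprod : (fold_right Z.mul 1%Z l <= Z.abs k)%Z).
  { apply Z.divide_pos_le; [lia|]. apply Z.divide_abs_r, prod_primes_divide; [exact Hnd|].
    intros p Hp. destruct (Hl p Hp) as [? [? ?]]. auto. }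
  rewrite <- ln_pow by exact Hx. apply ln_le; [apply pow_lt, Hx|].
  apply Rle_trans with (IZR (fold_right Z.mul 1%Z l)); [|apply IZR_le, Hprod].
  apply pow_le_prod; [lra|]. intros p Hp. apply Hl, Hp.
Qed.

Definition e (t : R) : C := (cos (2 * PI * t), sin (2 * PI * t)).

Fixpoint csum {A : Type} (l : list A) (g : A -> C) : C :=
  match l with nil => 0%C | x :: l' => (g x + csum l' g)%C end.

Fixpoint rsum {A : Type} (l : list A) (g : A -> R) : R :=
  match l with nil => 0 | x :: l' => g x + rsum l' g end.

Lemma csum_ext {A : Type} (l : list A) (g h : A -> C) :
  (forall x, In x l -> g x = h x) -> csum l g = csum l h.
Proof. induction l; simpl; intros H; auto. rewrite H, IHl; auto. Qed.

Lemma csum_app {A : Type} (l1 l2 : list A) g : csum (l1 ++ l2) g = (csum l1 g + csum l2 g)%C.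
Proof. induction l1; simpl; [ring|]. rewrite IHl1. ring. Qed.

Lemma csum_flat_map {A B : Type} (l : list A) (f : A -> list B) g :
  csum (flat_map f l) g = csum l (fun x => csum (f x) g).
Proof. induction l; simpl; auto. rewrite csum_app, IHl. reflexivity. Qed.

Lemma csum_map {A B : Type} (l : list A) (f : A -> B) g : csum (map f l) g = csum l (fun x => g (f x)).
Proof. induction l; simpl; auto. rewrite IHl. reflexivity. Qed.

Lemma csum_mulr {A : Type} (l : list A) g c : (csum l g * c)%C = csum l (fun x => g x * c)%C.
Proof. induction l; simpl; [ring|]. rewrite <- IHl. ring. Qed.

Lemma csum_mull {A : Type} (l : list A) g c : (c * csum l g)%C = csum l (fun x => c * g x)%C.
Proof. induction l; simpl; [ring|]. rewrite <- IHl. ring. Qed.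

Lemma csum_add {A : Type} (l : list A) g h : csum l (fun x => g x + h x)%C = (csum l g + csum l h)%C.
Proof. induction l; simpl; [ring|]. rewrite IHl. ring. Qed.

Lemma rsum_le {A : Type} (l : list A) g h : (forall x, In x l -> g x <= h x) -> rsum l g <= rsum l h.
Proof.
  induction l; simpl; intros H; [lra|].
  apply Rplus_le_compat; auto.
Qed.

Lemma rsum_const {A : Type} (l : list A) c : rsum l (fun _ => c) = INR (length l) * c.
Proof. induction l; simpl length; simpl rsum; [rewrite INR_0; ring|]. rewrite IHl, S_INR. ring. Qed.

Lemma rsum_add {A : Type} (l : list A) g h : rsum l (fun x => g x + h x) = rsum l g + rsum l h.
Proof. induction l; simpl; [ring|]. rewrite IHl. ring. Qed.

Lemma rsum_mull {A : Type} (l : list A) c g : rsum l (fun x => c * g x) = c * rsum l g.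
Proof. induction l; simpl; [ring|]. rewrite IHl. ring. Qed.

Lemma rsum_indicator {A : Type} (l : list A) (f : A -> bool) :
  rsum l (fun x => if f x then 1 else 0) = INR (length (filter f l)).
Proof.
  induction l; simpl; auto.
  destruct (f a); simpl length; rewrite IHl; try rewrite S_INR; ring.
Qed.

Lemma Cmod_csum_le {A : Type} (l : list A) g : Cmod (csum l g) <= rsum l (fun x => Cmod (g x)).
Proof.
  induction l; simpl; [rewrite Cmod_0; lra|].
  eapply Rle_trans; [apply Cmod_triangle|]. lra.
Qed.

Lemma Cmod_csum_le_const {A : Type} (l : list A) g c :
  (forall x, In x l -> Cmod (g x) <= c) -> Cmod (csum l g) <= INR (length l) * c.
Proof.
  intros H. rewrite <- rsum_const. eapply Rle_trans; [apply Cmod_csum_le|]. apply rsum_le, H.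
Qed.

Lemma Cmod_csum_perturb_le {A : Type} (l : list A) (g h : A -> C) (c : R) :
  (forall x, In x l -> Cmod (g x) <= 1 /\ Cmod (h x - 1) <= c) ->
  Cmod (csum l (fun x => g x * h x)%C) <= Cmod (csum l g) + INR (length l) * c.
Proof.
  intros H.
  rewrite (csum_ext l _ (fun x => g x + g x * (h x - 1))%C) by (intros; ring).
  rewrite csum_add. eapply Rle_trans; [apply Cmod_triangle|].
  apply Rplus_le_compat_l, Cmod_csum_le_const. intros x Hx.
  destruct (H x Hx) as [Hg Hh]. rewrite Cmod_mult.
  pose proof (Cmod_ge_0 (g x)). pose proof (Cmod_ge_0 (h x - 1)). nra.
Qed.

Lemma e_add x y : e (x + y) = (e x * e y)%C.
Proof.
  unfold e. replace (2 * PI * (x + y)) with (2 * PI * x + 2 * PI * y) by ring.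
  rewrite cos_plus, sin_plus. unfold Cmult; simpl. f_equal; ring.
Qed.

Lemma e_0 : e 0 = 1%C.
Proof. unfold e. rewrite Rmult_0_r, cos_0, sin_0. reflexivity. Qed.

Lemma e_INR (n : nat) : e (INR n) = 1%C.
Proof.
  unfold e. pose proof (cos_period 0 n) as Hc. pose proof (sin_period 0 n) as Hs.
  rewrite Rplus_0_l, cos_0 in Hc. rewrite Rplus_0_l, sin_0 in Hs.
  replace (2 * PI * INR n) with (2 * INR n * PI) by ring. rewrite Hc, Hs. reflexivity.
Qed.

Lemma e_IZR (n : Z) : e (IZR n) = 1%C.
Proof.
  destruct (Z_le_gt_dec 0 n) as [Hn|Hn].
  - rewrite <- (Z2Nat.id n), <- INR_IZR_INZ by exact Hn. apply e_INR.
  - replace n with (- Z.of_nat (Z.to_nat (- n)))%Z by lia.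
    rewrite opp_IZR, <- INR_IZR_INZ.
    transitivity (e (- INR (Z.to_nat (- n))) * e (INR (Z.to_nat (- n))))%C.
    + rewrite e_INR. ring.
    + rewrite <- e_add, Rplus_opp_l. apply e_0.
Qed.

Lemma e_add_IZR x (n : Z) : e (x + IZR n) = e x.
Proof. rewrite e_add, e_IZR. apply Cmult_1_r. Qed.

Lemma Cmod_e t : Cmod (e t) = 1.
Proof.
  unfold Cmod, e; simpl. rewrite !Rmult_1_r, Rplus_comm.
  change (sin (2 * PI * t) * sin (2 * PI * t) + cos (2 * PI * t) * cos (2 * PI * t))
    with ((sin (2 * PI * t))² + (cos (2 * PI * t))²).
  rewrite sin2_cos2. apply sqrt_1.
Qed.

Lemma Cmod_e_sub_1 t : Cmod (e t - 1)%C = 2 * Rabs (sin (PI * t)).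
Proof.
  unfold Cmod, e; simpl.
  replace (2 * PI * t) with (2 * (PI * t)) by ring. rewrite cos_2a_sin, sin_2a.
  set (a := PI * t). pose proof (sin2_cos2 a) as H. unfold Rsqr in H.
  match goal with |- sqrt ?x = _ => replace x with ((2 * sin a)²) by (unfold Rsqr; nra) end.
  rewrite sqrt_Rsqr_abs, Rabs_mult, (Rabs_right 2) by lra. reflexivity.
Qed.

Lemma Rabs_sin_PI_mul u : Rabs u <= 1 -> Rabs (sin (PI * u)) = sin (PI * Rabs u).
Proof.
  intros Hu. pose proof PI_RGT_0. destruct (Rle_dec 0 u) as [H0|H0].
  - rewrite (Rabs_right u) in * by lra. apply Rabs_right, Rle_ge, sin_ge_0; nra.
  - rewrite (Rabs_left u) in * by lra.
    replace (PI * u) with (- (PI * - u)) by ring. rewrite sin_neg, Rabs_Ropp.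
    apply Rabs_right, Rle_ge, sin_ge_0; nra.
Qed.

Lemma Cmod_e_sub_1_le t y : Rabs t <= y -> y <= 1 / 2 -> Cmod (e t - 1)%C <= 2 * sin (PI * y).
Proof.
  intros Hty Hy. pose proof PI_RGT_0. pose proof (Rabs_pos t).
  rewrite Cmod_e_sub_1, Rabs_sin_PI_mul by lra.
  apply Rmult_le_compat_l; [lra|]. apply sin_incr_1; nra.
Qed.

Definition geom_sum (n : nat) (u : R) : C := csum (seq 1 n) (fun r => e (u * INR r)).

Lemma csum_seq_e_mul (a n : nat) (u : R) :
  (csum (seq a n) (fun r => e (u * INR r)) * (e u - 1))%C = (e (u * INR (a + n)) - e (u * INR a))%C.
Proof.
  revert a. induction n as [|n IHn]; intros a; cbn [seq csum].
  - rewrite Nat.add_0_r. ring.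
  - rewrite Cmult_plus_distr_r, IHn, Nat.add_succ_r, <- Nat.add_succ_l, S_INR.
    replace (u * (INR a + 1)) with (u * INR a + u) by ring. rewrite e_add. ring.
Qed.

Lemma Cmod_geom_sum_le (n : nat) (u : R) : Cmod (geom_sum n u) <= INR n.
Proof.
  replace (INR n) with (INR (length (seq 1 n)) * 1) by (rewrite length_seq; ring).
  apply Cmod_csum_le_const.
  intros. rewrite Cmod_e. lra.
Qed.

Lemma Cmod_geom_sum_sin_le (n : nat) (u : R) :
  Cmod (geom_sum n u) * (2 * Rabs (sin (PI * u))) <= 2.
Proof.
  rewrite <- Cmod_e_sub_1, <- Cmod_mult. unfold geom_sum. rewrite csum_seq_e_mul.
  eapply Rle_trans; [apply Cmod_triangle|]. rewrite Cmod_opp, !Cmod_e. lra.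
Qed.

Lemma le_2_div_sqrt3 (a : R) : a * (sqrt 3 / 2) <= 1 -> a <= 2 / sqrt 3.
Proof.
  intros H. assert (0 < sqrt 3) by (apply sqrt_lt_R0; lra).
  apply Rmult_le_reg_r with (sqrt 3 / 2); [lra|].
  replace (2 / sqrt 3 * (sqrt 3 / 2)) with 1 by (field; lra). exact H.
Qed.

(* sin(pi u) = 2 sin(pi u / 2) cos(pi u / 2), and cos(pi u / 2) >= sqrt 3 / 2 when |u| <= 1/3. *)
Lemma Cmod_geom_sum_small (n : nat) (u : R) :
  Rabs u <= 1 / 3 -> Cmod (geom_sum n u) * (2 * sin (PI * (Rabs u / 2))) <= 2 / sqrt 3.
Proof.
  intros Hu. pose proof PI_RGT_0. pose proof (Rabs_pos u).
  pose proof (Cmod_geom_sum_sin_le n u) as HG. rewrite Rabs_sin_PI_mul in HG by lra.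
  replace (PI * Rabs u) with (2 * (PI * (Rabs u / 2))) in HG by field.
  rewrite sin_2a in HG. set (x := PI * (Rabs u / 2)) in *.
  assert (Hcos : sqrt 3 / 2 <= cos x).
  { rewrite <- cos_PI6. apply cos_decr_1; unfold x; nra. }
  assert (Hsin : 0 <= sin x) by (apply sin_ge_0; unfold x; nra).
  pose proof (Cmod_ge_0 (geom_sum n u)).
  assert (0 <= Cmod (geom_sum n u) * sin x * (cos x - sqrt 3 / 2)).
  { apply Rmult_le_pos; [apply Rmult_le_pos|]; lra. }
  apply le_2_div_sqrt3. nra.
Qed.

Lemma Cmod_geom_sum_large (n : nat) (u : R) :
  1 / 3 <= Rabs u <= 1 / 2 -> Cmod (geom_sum n u) <= 2 / sqrt 3.
Proof.
  intros Hu. pose proof PI_RGT_0.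
  pose proof (Cmod_geom_sum_sin_le n u) as HG. rewrite Rabs_sin_PI_mul in HG by lra.
  assert (Hsin : sqrt 3 / 2 <= sin (PI * Rabs u)).
  { rewrite <- sin_PI3. apply sin_incr_1; nra. }
  pose proof (Cmod_ge_0 (geom_sum n u)).
  apply le_2_div_sqrt3. nra.
Qed.

Lemma fabsS_csum (N : Z) (S : list Z) (k : Z) :
  fabsS N S k = Cmod (csum S (fun s => e (IZR k / IZR N * IZR s))).
Proof.
  unfold fabsS, Cmod. do 2 f_equal; f_equal; induction S as [|s S IHS]; simpl; auto;
    rewrite IHS; unfold e; simpl; do 2 f_equal; unfold Rdiv; ring.
Qed.

Lemma fabsS_mod (N : Z) (S : list Z) (k : Z) : N <> 0%Z -> fabsS N S (k mod N) = fabsS N S k.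
Proof.
  intros HN. assert (HNR : IZR N <> 0) by (apply not_0_IZR, HN).
  rewrite !fabsS_csum. f_equal. apply csum_ext. intros s _.
  rewrite (Z_div_mod_eq_full k N) at 2.
  rewrite <- e_add_IZR with (n := (k / N * s)%Z). f_equal.
  rewrite plus_IZR, !mult_IZR. field. exact HNR.
Qed.

Lemma In_le_fold_right_Rmax (x : R) (l : list R) : In x l -> x <= fold_right Rmax 0 l.
Proof.
  induction l as [|y l IHl]; simpl; [tauto|]. intros [->|Hx]; [apply Rmax_l|].
  eapply Rle_trans; [apply IHl, Hx|apply Rmax_r].
Qed.

Lemma fold_right_Rmax_le (c : R) (l : list R) :
  0 <= c -> (forall x, In x l -> x <= c) -> fold_right Rmax 0 l <= c.
Proof. induction l; simpl; intros Hc H; auto. apply Rmax_lub; auto. Qed.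

Lemma fabsS_le_fnorm (N : Z) (S : list Z) (k : Z) :
  (0 < N)%Z -> ~ (N | k)%Z -> (0 < length S)%nat ->
  fabsS N S k <= INR (length S) * fnorm N S.
Proof.
  intros HN Hk HS. assert (HSR : 0 < INR (length S)) by (apply lt_0_INR, HS).
  assert (Hkm : (0 < k mod N < N)%Z).
  { pose proof (Z.mod_pos_bound k N HN).
    assert (k mod N <> 0)%Z by (intros H0; apply Hk, Z.mod_divide; lia). lia. }
  rewrite <- fabsS_mod by lia. unfold fnorm.
  rewrite <- Rmult_assoc, Rinv_r, Rmult_1_l by lra.
  apply In_le_fold_right_Rmax, in_map_iff. exists (k mod N)%Z. split; [reflexivity|].
  apply in_map_iff. exists (Z.to_nat (k mod N)). split; [lia|]. apply in_seq. lia.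
Qed.

Lemma fnorm_le (N : Z) (S : list Z) (c : R) :
  (0 < length S)%nat -> 0 <= c ->
  (forall k, (0 < k < N)%Z -> fabsS N S k <= INR (length S) * c) -> fnorm N S <= c.
Proof.
  intros HS Hc Hk. assert (HSR : 0 < INR (length S)) by (apply lt_0_INR, HS).
  unfold fnorm. apply Rmult_le_reg_l with (INR (length S)); [exact HSR|].
  rewrite <- Rmult_assoc, Rinv_r, Rmult_1_l by lra.
  apply fold_right_Rmax_le; [apply Rmult_le_pos; lra|].
  intros x Hx. apply in_map_iff in Hx as [k [<- Hx]].
  apply in_map_iff in Hx as [n [<- Hn]]. apply in_seq in Hn. apply Hk. lia.
Qed.

Lemma length_flat_map_const {A B : Type} (f : A -> list B) (l : list A) (n : nat) :
  (forall x, In x l -> length (f x) = n) -> length (flat_map f l) = (length l * n)%nat.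
Proof. induction l; simpl; intros H; auto. rewrite length_app, H, IHl; auto. Qed.

Lemma length_Tset (Rn : nat) (ps : list Z) (Sp : Z -> list Z) (q : Z) (S : nat) :
  (forall p, In p ps -> length (Sp p) = S) ->
  length (Tset Rn ps Sp q) = (Rn * (length ps * S))%nat.
Proof.
  intros HS. unfold Tset. rewrite (length_flat_map_const _ _ (length ps * S)), length_seq; auto.
  intros r _. apply length_flat_map_const. intros p Hp. rewrite length_map. apply HS, Hp.
Qed.

Definition prime_sum (ps : list Z) (Sp : Z -> list Z) (q : Z) (u : R) : C :=
  csum ps (fun p => csum (Sp p) (fun s => e (u * IZR (s * inv_mod p q)))).

Lemma csum_Tset (Rn : nat) (ps : list Z) (Sp : Z -> list Z) (q : Z) (u : R) :
  csum (Tset Rn ps Sp q) (fun t => e (u * IZR t)) = (geom_sum Rn u * prime_sum ps Sp q u)%C.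
Proof.
  unfold Tset, geom_sum, prime_sum. rewrite csum_flat_map, csum_mulr. apply csum_ext. intros r _.
  rewrite csum_flat_map, csum_mull. apply csum_ext. intros p _.
  rewrite csum_map, csum_mull. apply csum_ext. intros s _.
  rewrite <- e_add, plus_IZR, <- INR_IZR_INZ. f_equal. ring.
Qed.

Lemma prime_not_divide_mul_quotient (p q a b k : Z) :
  prime p -> (p * a = 1 + q * b)%Z -> ~ (p | k)%Z -> ~ (p | k * b)%Z.
Proof.
  intros Hp Hab Hk Hdiv. pose proof (prime_ge_2 p Hp).
  destruct (prime_mult p Hp k b Hdiv) as [Hpk|[c Hc]]; [exact (Hk Hpk)|].
  assert (Hone : (p * (a - q * c) = 1)%Z) by (rewrite Hc in Hab; lia).
  apply Z.eq_mul_1 in Hone. lia.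
Qed.

Lemma Cmod_prime_term_le (p q k : Z) (S : list Z) (eps : R) :
  prime p -> prime q -> (p < q)%Z -> (0 < length S)%nat ->
  (forall s, In s S -> Rabs (IZR s) <= IZR p / 2) -> 0 <= eps -> fnorm p S <= eps ->
  Rabs (IZR k / IZR q) <= 1 ->
  Cmod (csum S (fun s => e (IZR k / IZR q * IZR (s * inv_mod p q)))) <=
  INR (length S) * eps + INR (length S) * (if (k mod p =? 0)%Z then 1 else 0)
  + INR (length S) * (2 * sin (PI * (Rabs (IZR k / IZR q) / 2))).
Proof.
  intros Hp Hq Hpq HS Hs He Hf Hu.
  pose proof (prime_ge_2 p Hp). pose proof (prime_ge_2 q Hq). pose proof PI_RGT_0.
  assert (HpR : 0 < IZR p) by (apply IZR_lt; lia).
  assert (HqR : 0 < IZR q) by (apply IZR_lt; lia).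
  assert (HSR : 0 < INR (length S)) by (apply lt_0_INR, HS).
  destruct (inv_mod_spec p q Hq) as [b Hb]; [lia|].
  set (u := IZR k / IZR q) in *. set (a := inv_mod p q) in *.
  (* [p a = 1 + q b] splits the phase [u s a] into [k b s / p] plus the small [u s / p]. *)
  rewrite (csum_ext S _ (fun s => e (IZR (k * b) / IZR p * IZR s) * e (u / IZR p * IZR s))%C).
  2:{ intros s _. rewrite <- e_add. f_equal.
      apply (f_equal IZR) in Hb. rewrite mult_IZR, plus_IZR, mult_IZR in Hb.
      unfold u. rewrite !mult_IZR.
      replace (IZR a) with ((1 + IZR q * IZR b) / IZR p) by (rewrite <- Hb; field; lra).
      field. lra. }
  eapply Rle_trans.
  { apply Cmod_csum_perturb_le with (c := 2 * sin (PI * (Rabs u / 2))).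
    intros s Hin. split; [rewrite Cmod_e; lra|].
    apply Cmod_e_sub_1_le; [|pose proof (Rabs_pos u); lra].
    rewrite Rabs_mult, Rabs_div, (Rabs_right (IZR p)) by lra.
    pose proof (Hs s Hin). pose proof (Rabs_pos u).
    unfold Rdiv. rewrite Rmult_assoc. apply Rmult_le_compat_l; [lra|].
    apply Rmult_le_reg_l with (IZR p); [lra|].
    rewrite <- Rmult_assoc, Rinv_r, Rmult_1_l by lra. lra. }
  apply Rplus_le_compat_r. destruct (Z.eqb_spec (k mod p) 0) as [Hk|Hk].
  - eapply Rle_trans; [apply Cmod_csum_le_const with (c := 1)|].
    + intros. rewrite Cmod_e. lra.
    + pose proof (Rmult_le_pos _ _ (pos_INR (length S)) He). lra.
  - assert (Hkb : ~ (p | k * b)%Z).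
    { apply (prime_not_divide_mul_quotient p q a); [exact Hp|exact Hb|].
      intros Hpk. apply Hk, Z.mod_divide; [lia|exact Hpk]. }
    rewrite <- fabsS_csum. eapply Rle_trans; [apply fabsS_le_fnorm; auto; lia|].
    apply Rmult_le_compat_l with (r := INR (length S)) in Hf; [lra|apply pos_INR].
Qed.

Lemma fnorm_nil (N : Z) : fnorm N nil = 0.
Proof. unfold fnorm. simpl length. rewrite INR_0, Rinv_0. apply Rmult_0_l. Qed.

Section FrequencyBound.

Variables (P eps : R) (S Rn : nat) (ps : list Z) (Sp : Z -> list Z) (q : Z).
Hypotheses (HP : 4 <= P) (He : 0 <= eps) (HR : (1 <= Rn)%nat) (HS : (1 <= S)%nat)
  (Hnd : NoDup ps) (Hq : prime q) (HPq : P < IZR q).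
Hypothesis Hps : forall p : Z, In p ps <-> (prime p /\ P / 2 < IZR p /\ IZR p <= P).
Hypothesis HSp : forall p : Z, In p ps ->
  length (Sp p) = S /\
  (forall s : Z, In s (Sp p) -> - (IZR p / 2) < IZR s /\ IZR s < IZR p / 2) /\
  fnorm p (Sp p) <= eps.

Lemma IZR_q_gt0 : 0 < IZR q.
Proof. apply IZR_lt. pose proof (prime_ge_2 q Hq). lia. Qed.

Lemma ln_P_half_gt0 : 0 < ln (P / 2).
Proof. rewrite <- ln_1. apply ln_increasing; lra. Qed.

Lemma ln_q_third_gt0 : 0 < ln (IZR q / 3).
Proof. rewrite <- ln_1. apply ln_increasing; lra. Qed.

Lemma Rabs_div_q (k : Z) : Rabs (IZR k / IZR q) = IZR (Z.abs k) / IZR q.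
Proof.
  pose proof IZR_q_gt0. rewrite Rabs_div, <- abs_IZR, (Rabs_right (IZR q)) by lra.
  reflexivity.
Qed.

Lemma count_prime_divisors_le (k : Z) :
  k <> 0%Z -> (3 * Z.abs k <= q)%Z ->
  INR (length (filter (fun p => (k mod p =? 0)%Z) ps)) <= ln (IZR q / 3) / ln (P / 2).
Proof.
  intros Hk Hkq. pose proof ln_P_half_gt0. apply Rle_div_r; [lra|].
  eapply Rle_trans.
  - apply (count_large_prime_divisors (P / 2) k); [lra|exact Hk|apply NoDup_filter, Hnd|].
    intros p Hp. apply filter_In in Hp as [Hp Hdiv]. apply Hps in Hp as [Hpr [Hp1 _]].
    pose proof (prime_ge_2 p Hpr).
    split; [exact Hpr|split; [lra|apply Z.mod_divide; lia]].
  - apply ln_le; [apply IZR_lt; lia|].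
    apply IZR_le in Hkq. rewrite mult_IZR in Hkq. lra.
Qed.

Lemma Cmod_prime_sum_small (k : Z) :
  k <> 0%Z -> (3 * Z.abs k <= q)%Z ->
  Cmod (prime_sum ps Sp q (IZR k / IZR q)) <=
  INR (length ps) * INR S * eps + INR S * (ln (IZR q / 3) / ln (P / 2))
  + INR (length ps) * INR S * (2 * sin (PI * (Rabs (IZR k / IZR q) / 2))).
Proof.
  intros Hk Hkq. pose proof IZR_q_gt0.
  set (delta := 2 * sin (PI * (Rabs (IZR k / IZR q) / 2))).
  eapply Rle_trans; [apply Cmod_csum_le|].
  eapply Rle_trans.
  { apply rsum_le with (h := fun p =>
      INR S * eps + INR S * (if (k mod p =? 0)%Z then 1 else 0) + INR S * delta).
    intros p Hp. destruct (HSp p Hp) as [Hlen [Hs Hf]]. apply Hps in Hp as [Hpr [_ HpP]].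
    rewrite <- Hlen. apply Cmod_prime_term_le; auto.
    - apply lt_IZR. lra.
    - rewrite Hlen. lia.
    - intros s Hin. apply Rabs_le. specialize (Hs s Hin). lra.
    - rewrite Rabs_div_q. apply Rle_div_l; [lra|].
      apply IZR_le in Hkq. rewrite mult_IZR in Hkq.
      pose proof (IZR_le _ _ (Z.abs_nonneg k)). lra. }
  rewrite !rsum_add, !rsum_mull, !rsum_const, rsum_indicator.
  pose proof (count_prime_divisors_le k Hk Hkq). pose proof (pos_INR S). nra.
Qed.

Lemma Cmod_prime_sum_le (u : R) : Cmod (prime_sum ps Sp q u) <= INR (length ps) * INR S.
Proof.
  apply Cmod_csum_le_const. intros p Hp.
  destruct (HSp p Hp) as [Hlen _]. rewrite <- Hlen, <- Rmult_1_r.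
  apply Cmod_csum_le_const. intros. rewrite Cmod_e. lra.
Qed.

Lemma Cmod_geom_prime_sum_small (k : Z) :
  k <> 0%Z -> (3 * Z.abs k <= q)%Z ->
  Cmod (geom_sum Rn (IZR k / IZR q)) * Cmod (prime_sum ps Sp q (IZR k / IZR q)) <=
  INR Rn * INR (length ps) * INR S * eps + INR (length ps) * INR S * (2 / sqrt 3)
  + INR Rn * INR S * (ln (IZR q / 3) / ln (P / 2)).
Proof.
  intros Hk Hkq. pose proof IZR_q_gt0 as Hq0.
  set (u := IZR k / IZR q).
  assert (Hu : Rabs u <= 1 / 3).
  { unfold u. rewrite Rabs_div_q. apply Rle_div_l; [lra|].
    apply IZR_le in Hkq. rewrite mult_IZR in Hkq. lra. }
  pose proof (Cmod_geom_sum_small Rn u Hu) as HGd.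
  pose proof (Cmod_prime_sum_small k Hk Hkq) as HHb. fold u in HHb.
  set (G := Cmod (geom_sum Rn u)) in *. set (Hp := Cmod (prime_sum ps Sp q u)) in *.
  set (delta := 2 * sin (PI * (Rabs u / 2))) in *.
  set (c := ln (IZR q / 3) / ln (P / 2)) in *.
  assert (HG0 : 0 <= G) by apply Cmod_ge_0.
  assert (HGR : G <= INR Rn) by apply Cmod_geom_sum_le.
  assert (Hc : 0 <= c).
  { pose proof ln_P_half_gt0. pose proof ln_q_third_gt0. apply Rdiv_le_0_compat; lra. }
  assert (0 <= INR (length ps) * INR S * eps).
  { apply Rmult_le_pos; [apply Rmult_le_pos; apply pos_INR|exact He]. }
  pose proof (pos_INR S). pose proof (pos_INR (length ps)).
  assert (G * Hp <= G * (INR (length ps) * INR S * eps + INR S * c)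
                   + INR (length ps) * INR S * (G * delta)).
  { replace (G * (INR (length ps) * INR S * eps + INR S * c) + INR (length ps) * INR S * (G * delta))
      with (G * (INR (length ps) * INR S * eps + INR S * c + INR (length ps) * INR S * delta))
      by ring.
    apply Rmult_le_compat_l; [exact HG0|exact HHb]. }
  assert (G * (INR (length ps) * INR S * eps + INR S * c)
          <= INR Rn * (INR (length ps) * INR S * eps + INR S * c)).
  { apply Rmult_le_compat_r; [nra|exact HGR]. }
  assert (INR (length ps) * INR S * (G * delta) <= INR (length ps) * INR S * (2 / sqrt 3)).
  { apply Rmult_le_compat_l; [nra|exact HGd]. }
  nra.
Qed.

Lemma Cmod_geom_prime_sum_large (k : Z) :
  (q < 3 * Z.abs k)%Z -> (2 * Z.abs k <= q)%Z ->
  Cmod (geom_sum Rn (IZR k / IZR q)) * Cmod (prime_sum ps Sp q (IZR k / IZR q)) <=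
  INR Rn * INR (length ps) * INR S * eps + INR (length ps) * INR S * (2 / sqrt 3)
  + INR Rn * INR S * (ln (IZR q / 3) / ln (P / 2)).
Proof.
  intros Hkq3 Hkq2. pose proof IZR_q_gt0.
  assert (Hu : 1 / 3 <= Rabs (IZR k / IZR q) <= 1 / 2).
  { rewrite Rabs_div_q. apply IZR_le in Hkq2. rewrite mult_IZR in Hkq2. split.
    - apply (Rle_div_r (1 / 3)); [lra|]. apply IZR_lt in Hkq3. rewrite mult_IZR in Hkq3. lra.
    - apply Rle_div_l; lra. }
  pose proof (Cmod_geom_sum_large Rn _ Hu).
  pose proof (Cmod_prime_sum_le (IZR k / IZR q)).
  pose proof (Cmod_ge_0 (geom_sum Rn (IZR k / IZR q))).
  pose proof (Cmod_ge_0 (prime_sum ps Sp q (IZR k / IZR q))).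
  assert (0 <= INR Rn * INR (length ps) * INR S * eps).
  { apply Rmult_le_pos; [repeat apply Rmult_le_pos; apply pos_INR|exact He]. }
  assert (0 <= INR Rn * INR S * (ln (IZR q / 3) / ln (P / 2))).
  { pose proof ln_P_half_gt0. pose proof ln_q_third_gt0.
    apply Rmult_le_pos; [apply Rmult_le_pos; apply pos_INR|apply Rdiv_le_0_compat; lra]. }
  nra.
Qed.

Lemma fabsS_Tset_le (k : Z) :
  ps <> nil -> k <> 0%Z -> (2 * Z.abs k <= q)%Z ->
  fabsS q (Tset Rn ps Sp q) k <=
  INR (length (Tset Rn ps Sp q)) *
  (eps + (2 / sqrt 3) / INR Rn + ln (IZR q / 3) / (INR (length ps) * ln (P / 2))).
Proof.
  intros Hps0 Hk Hkq.
  assert (HV : 0 < INR (length ps)) by (apply (lt_INR 0); destruct ps; [congruence|simpl; lia]).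
  assert (HRn : 0 < INR Rn) by (apply (lt_INR 0); lia).
  assert (Hs3 : 0 < sqrt 3) by (apply sqrt_lt_R0; lra).
  pose proof ln_P_half_gt0.
  rewrite (length_Tset Rn ps Sp q S) by (intros p Hp; apply HSp, Hp).
  rewrite !mult_INR, fabsS_csum, csum_Tset, Cmod_mult.
  replace (INR Rn * (INR (length ps) * INR S)
           * (eps + 2 / sqrt 3 / INR Rn + ln (IZR q / 3) / (INR (length ps) * ln (P / 2))))
    with (INR Rn * INR (length ps) * INR S * eps + INR (length ps) * INR S * (2 / sqrt 3)
          + INR Rn * INR S * (ln (IZR q / 3) / ln (P / 2))) by (field; lra).
  destruct (Z_le_gt_dec (3 * Z.abs k) q).
  - apply Cmod_geom_prime_sum_small; assumption.
  - apply Cmod_geom_prime_sum_large; lia.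
Qed.

End FrequencyBound.

Theorem lemma12 (P : R) (S : nat) (eps : R) (Rn : nat)
  (ps : list Z) (Sp : Z -> list Z) (q : Z) :
  4 <= P -> (2 <= S)%nat -> 0 <= eps -> (1 <= Rn)%nat ->
  (* ps enumerates (without repetition) the primes p with P/2 < p <= P *)
  NoDup ps ->
  (forall p : Z, In p ps <-> (prime p /\ P / 2 < IZR p /\ IZR p <= P)) ->
  (forall p : Z, In p ps ->
     length (Sp p) = S /\
     (forall s : Z, In s (Sp p) -> - (IZR p / 2) < IZR s /\ IZR s < IZR p / 2) /\
     fnorm p (Sp p) <= eps) ->
  prime q -> P < IZR q ->
  fnorm q (Tset Rn ps Sp q) <=
    eps + (2 / sqrt 3) / INR Rn
        + ln (IZR q / 3) / (INR (length ps) * ln (P / 2)).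
Proof.
  intros HP HS He HR Hnd Hps HSp Hq HPq.
  pose proof (prime_ge_2 q Hq) as Hq2.
  assert (Hs3 : 0 < 2 / sqrt 3 / INR Rn).
  { apply Rdiv_lt_0_compat; [apply Rdiv_lt_0_compat; [lra|apply sqrt_lt_R0; lra]|].
    apply (lt_INR 0). lia. }
  destruct (list_eq_dec Z.eq_dec ps nil) as [->|Hps0].
  - replace (Tset Rn nil Sp q) with (@nil Z) by (unfold Tset; induction (seq 1 Rn); auto).
    simpl length. rewrite fnorm_nil, Rmult_0_l, Rdiv_0_r. lra.
  - assert (HV1 : (0 < length ps)%nat) by (destruct ps; [congruence|simpl; lia]).
    apply fnorm_le.
    + rewrite (length_Tset Rn ps Sp q S) by (intros p Hp; apply HSp, Hp).
      apply Nat.mul_pos_pos; [lia|]. apply Nat.mul_pos_pos; lia.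
    + pose proof (ln_P_half_gt0 P HP). pose proof (ln_q_third_gt0 P q HP HPq).
      assert (0 <= ln (IZR q / 3) / (INR (length ps) * ln (P / 2))).
      { apply Rdiv_le_0_compat; [lra|]. apply Rmult_lt_0_compat; [apply (lt_INR 0), HV1|lra]. }
      lra.
    + intros k Hk. destruct (Z_le_gt_dec (2 * k) q) as [Hlow|Hhigh].
      * apply fabsS_Tset_le with (S := S); auto; lia.
      (* f_T(k) = f_T(k - q) *)
      * rewrite <- fabsS_mod, <- (Z.mod_add k (-1) q), fabsS_mod by lia.
        apply fabsS_Tset_le with (S := S); auto; lia.
Qed.
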